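(* Let $K$ be a field and $(Q,f,g,c,W)$ as in the setting below, with completed Jacobian algebra $\Lambda$, and assume that either $Q$ satisfies $(\star)$, or $Q$ satisfies $(\diamond)$ and $\prod_{\alpha\in\Omega}c_\alpha\neq1$ for $\Omega$ a set of representatives of the $g$-orbits. Then for every $i\in Q_0$ and every $\alpha\in Q_1$ we have $\alpha\cdot z_i=0$ and $z_i\cdot\alpha=0$ in $\Lambda$.
   Context: Setting: $Q$ is a finite quiver with vertex set $Q_0$ and arrow set $Q_1$, connected, without loops or $2$-cycles, every vertex being the source of exactly two arrows and the target of exactly two arrows, equipped with bijections $f,g:Q_1\to Q_1$ such that for each $\alpha$, $\{f(\alpha),g(\alpha)\}$ is the set of the two arrows starting at the target of $\alpha$, and $f^3=\mathrm{id}$. $n_\alpha$ is the size of the $g$-orbit of $\alpha$. $c:Q_1\to K^\times$ is constant on $g$-orbits. Paths compose left to right. $W=\sum_\alpha \alpha\cdot f(\alpha)\cdot f^2(\alpha)-\sum_\beta c_\beta\,\beta\cdot g(\beta)\cdots g^{n_\beta-1}(\beta)$ (sums over representatives of $f$-orbits, resp. $g$-orbits). $\Lambda$ is the completed Jacobian algebra of $(Q,W)$. For $i\in Q_0$, $z_i$ is the image in $\Lambda$ of $\alpha\cdot f(\alpha)\cdot f^2(\alpha)$ for an arrow $\alpha$ starting at $i$ (independent of the choice of $\alpha$ in $\Lambda$). $(\star)$: for every $\alpha$, $n_\alpha\ge4$ or $n_{f(\alpha)}\ge4$. $(\diamond)$: $n_\alpha=3$ for all $\alpha$. *)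

From HB Require Import structures.
From mathcomp Require Import all_boot all_order all_algebra.
Set Implicit Arguments. Unset Strict Implicit. Unset Printing Implicit Defensive.
Import GRing.Theory.
Local Open Scope ring_scope.

(* Paths compose left to
   right.  A (possibly invalid) "path word" is a pair (v, p) : V * seq A,
   meant as the path starting at vertex v followed by the arrows of p
   ((v, [::]) is the trivial path e_v).  Elements of the completed path
   algebra K<<Q>> are arbitrary (possibly infinite-support) K-valued
   functions on valid paths. *)

Section PathAlgebra.
Variables (K : fieldType) (V A : finType) (s t : A -> V).

Fixpoint valid_from (v : V) (p : seq A) : bool :=
  if p is a :: p' then (s a == v) && valid_from (t a) p' else true.

Definition elt := (V * seq A)%type -> K.

Definition is_elt (x : elt) : Prop :=
  forall q : V * seq A, ~~ valid_from q.1 q.2 -> x q = 0.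

Definition endv (v : V) (p : seq A) : V := last v (map t p).

Definition pathel (v : V) (p : seq A) : elt :=
  fun q => if q == (v, p) then 1 else 0.

Definition emul (x y : elt) : elt :=
  fun q => \sum_(k < (size q.2).+1)
             x (q.1, take k q.2) * y (endv q.1 (take k q.2), drop k q.2).

(* cyclic derivative with respect to the arrow gam of the cycle
   cyc = a_0 ... a_{m-1}:  sum over k with a_k = gam of a_{k+1}...a_{k-1} *)
Definition cycder (cyc : seq A) (gam : A) : elt :=
  fun q => \sum_(k < size cyc | nth gam cyc k == gam)
             pathel (t gam) (take (size cyc).-1 (rot k.+1 cyc)) q.

(* cyclic derivative d_gam W of the potential
   W = sum_{f-orbit reps a} a f(a) f^2(a)
       - sum_{g-orbit reps b} c_b b g(b) ... g^{n_b - 1}(b) *)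
Definition dW (f g : A -> A) (c : A -> K) (gam : A) : elt :=
  fun q => \sum_(a | froot f a == a) cycder [:: a; f a; f (f a)] gam q
         - \sum_(b | froot g b == b) c b * cycder (traject g b (order g b)) gam q.

Definition in_gen_ideal f g c (x : elt) : Prop :=
  exists (n : nat) (a b : 'I_n -> elt) (gam : 'I_n -> A),
    (forall k, is_elt (a k) /\ is_elt (b k)) /\
    forall q, x q = \sum_(k < n) emul (emul (a k) (dW f g c (gam k))) (b k) q.

(* x lies in the closure J(W) of that ideal for the m-adic topology
   (m = arrow ideal; m^n = elements supported on paths of length >= n).
   Then x = 0 in the completed Jacobian algebra Lambda = K<<Q>>/J(W). *)
Definition in_jacobian_ideal f g c (x : elt) : Prop :=
  forall n : nat, exists y : elt, in_gen_ideal f g c y /\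
    forall q : V * seq A, (size q.2 < n)%N -> x q = y q.

(* the representative alpha f(alpha) f^2(alpha) of z_i, for alpha starting at i *)
Definition zrep (f : A -> A) (al : A) : elt := pathel (s al) [:: al; f al; f (f al)].
End PathAlgebra.

Definition quiver_setting (K : fieldType) (V A : finType) (s t : A -> V)
    (f g : A -> A) (c : A -> K) : Prop :=
  [/\
      forall u v : V, connect (fun x y => [exists a : A,
             ((s a == x) && (t a == y)) || ((s a == y) && (t a == x))]) u v,
      forall a : A, s a != t a,
      forall a b : A, ~ (s a = t b /\ t a = s b),
      forall v : V, #|[set a | s a == v]| = 2 /\ #|[set a | t a == v]| = 2 &
      [/\ injective f, injective g,
          forall a : A, [/\ s (f a) = t a, s (g a) = t a & f a != g a],
          forall a : A, f (f (f a)) = a &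
          forall a : A, c a != 0 /\ c (g a) = c a]].

(* Let zpath a be the path a f(a) g(f a).  With gamma = f^2(a), the relation
   d_gamma W identifies a f(a) with c_gamma times the rest of the g-cycle of
   gamma, which ends in alpha epsilon; epsilon g(f a) is f(delta) f^2(delta) for
   delta = f^2(epsilon), and d_delta W turns alpha f(delta) f^2(delta) into
   c_delta zpath(alpha) w.  So modulo J(W), zpath a = c_gamma c_delta u zpath(alpha) w
   with |u| + |w| = n_gamma + n_delta - 6.  Under (star) this length is positive,
   so iterating puts zpath a in J(W) + m^N for every N, i.e. in the closed ideal
   J(W).  Under (diamond) u and w are empty, the quiver is the octahedron and
   alpha(alpha a) = a, so two steps give (1 - prod c_b) zpath a in J(W).  Finally
   alpha z_i and z_i alpha reduce to zpath's by one or two more relations. *)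

From mathcomp Require Import all_boot all_order all_algebra.
From mathcomp Require Import zify ring.
Set Implicit Arguments. Unset Strict Implicit. Unset Printing Implicit Defensive.
Import GRing.Theory.
Local Open Scope ring_scope.

(** * Basis paths of the completed path algebra *)

Section PathBasis.
Variables (K : fieldType) (V A : finType) (s t : A -> V).
Local Notation elt := (elt K V A).

(* Unlike [pathel], [vpath] vanishes on invalid paths, so that [emul_vpath]
   needs no side condition. *)
Definition vpath (v : V) (p : seq A) : elt :=
  fun q => if valid_from s t v p && (q == (v, p)) then 1 else 0.

Lemma endv_cat v p r : endv t v (p ++ r) = endv t (endv t v p) r.
Proof. by rewrite /endv map_cat last_cat. Qed.

Lemma endv_rcons v p x : endv t v (rcons p x) = t x.
Proof. by rewrite /endv map_rcons last_rcons. Qed.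

Lemma valid_from_cat v p r :
  valid_from s t v (p ++ r) = valid_from s t v p && valid_from s t (endv t v p) r.
Proof. by elim: p v => [|a p IH] v //=; rewrite IH andbA. Qed.

Lemma pathel_vpath v p q : valid_from s t v p -> pathel K v p q = vpath v p q.
Proof. by move=> vp; rewrite /pathel /vpath vp. Qed.

Lemma vpath_is_elt v p : is_elt s t (vpath v p).
Proof.
move=> q; rewrite /vpath; case: eqP => [-> /negbTE -> //|]; by rewrite andbF.
Qed.

Lemma vpath_neq v p q : q != (v, p) -> vpath v p q = 0.
Proof. by rewrite /vpath => /negbTE ->; rewrite andbF. Qed.

Lemma emul_vpath v p w r q :
  emul t (vpath v p) (vpath w r) q = if endv t v p == w then vpath v (p ++ r) q else 0.
Proof.
case: q => v' r'; rewrite /emul /=.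
have nonzero_term k :
    vpath v p (v', take k r') * vpath w r (endv t v' (take k r'), drop k r') != 0 ->
    [/\ v' = v, take k r' = p, endv t v p = w, drop k r' = r
      & valid_from s t v p && valid_from s t w r].
  rewrite /vpath; case: (valid_from s t v p); last by rewrite mul0r eqxx.
  case: ((v', take k r') =P (v, p)) => [[-> tk]|_]; last by rewrite mul0r eqxx.
  case: (valid_from s t w r); last by rewrite mulr0 eqxx.
  case: ((endv t v (take k r'), drop k r') =P (w, r)) => [[ew dk]|_]; last first.
    by rewrite mulr0 eqxx.
  by rewrite -tk.
have [/eqP ew|new] := boolP (endv t v p == w); last first.
  rewrite big1 // => k _; apply/eqP; apply: contraNT new => /nonzero_term[_ _ -> _ _].
  exact: eqxx.
have [[ev er]|nq] := eqVneq (v', r') (v, p ++ r); last first.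
  rewrite vpath_neq // big1 // => k _; apply/eqP; apply: contraNT nq.
  by case/nonzero_term=> -> tk _ dk _; rewrite -tk -dk cat_take_drop.
subst v' r'.
have lt_p : (size p < (size (p ++ r)).+1)%N by rewrite size_cat ltnS leq_addr.
rewrite (big_only1 (Ordinal lt_p)) //=.
  rewrite take_size_cat // drop_size_cat // ew /vpath valid_from_cat ew !eqxx !andbT.
  by case: (valid_from s t v p); case: (valid_from s t w r); rewrite ?mulr1 ?mulr0.
move=> k nk _; apply/eqP; apply: contraNT nk => /nonzero_term[_ tk _ _ _].
apply/eqP/val_inj => /=; move: (ltn_ord k) (congr1 size tk); move: (nat_of_ord k) => n.
rewrite size_take size_cat ltnS; case: ltnP => ? ? ?; lia.
Qed.

Lemma eq_emull (x x' y : elt) q : x =1 x' -> emul t x y q = emul t x' y q.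
Proof. by move=> ex; apply: eq_bigr => k _; rewrite ex. Qed.

Lemma eq_emulr (x y y' : elt) q : y =1 y' -> emul t x y q = emul t x y' q.
Proof. by move=> ey; apply: eq_bigr => k _; rewrite ey. Qed.

Lemma emul0l (y : elt) q : emul t (fun _ => 0) y q = 0.
Proof. by rewrite /emul big1 // => k _; rewrite mul0r. Qed.

Lemma emulZl a (x y : elt) q : emul t (fun q => a * x q) y q = a * emul t x y q.
Proof. by rewrite /emul mulr_sumr; apply: eq_bigr => k _; rewrite mulrA. Qed.

Lemma emulBl a (x1 x2 y : elt) q :
  emul t (fun q => x1 q - a * x2 q) y q = emul t x1 y q - a * emul t x2 y q.
Proof.
by rewrite /emul mulr_sumr -sumrB; apply: eq_bigr => k _; rewrite mulrBl mulrA.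
Qed.

Lemma emulBr a (x y1 y2 : elt) q :
  emul t x (fun q => y1 q - a * y2 q) q = emul t x y1 q - a * emul t x y2 q.
Proof.
by rewrite /emul mulr_sumr -sumrB; apply: eq_bigr => k _; rewrite mulrBr mulrCA.
Qed.

Lemma emul_vpath3 v p w r u m q :
  emul t (emul t (vpath v p) (vpath w r)) (vpath u m) q =
  if (endv t v p == w) && (endv t w r == u) then vpath v (p ++ r ++ m) q else 0.
Proof.
have [ew|new] := eqVneq (endv t v p) w; last first.
  by rewrite (eq_emull (x' := fun _ => 0)) ?emul0l // => q'; rewrite emul_vpath (negbTE new).
rewrite (eq_emull (x' := vpath v (p ++ r))) => [|q']; last by rewrite emul_vpath ew eqxx.
by rewrite emul_vpath endv_cat ew catA.
Qed.
End PathBasis.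

(** * Orbits and cyclic derivatives *)

Section Orbits.
Variables (T : finType) (h : T -> T).
Hypothesis h_inj : injective h.
Let h_sym : connect_sym (frel h) := fconnect_sym h_inj.

Lemma order_fconnect x y : fconnect h x y -> order h x = order h y.
Proof. by move=> xy; apply: eq_card => z; apply: (same_connect h_sym xy). Qed.

Lemma order_iter n x : order h (iter n h x) = order h x.
Proof. by symmetry; apply/order_fconnect/fconnect_iter. Qed.

Lemma rot_orbit k x : (k <= order h x)%N -> rot k (orbit h x) = orbit h (iter k h x).
Proof.
move=> le_k; rewrite /orbit order_iter -{1}(subnKC le_k) trajectD.
rewrite /rot take_size_cat ?size_traject // drop_size_cat ?size_traject //.
by rewrite -[in RHS](subnK le_k) trajectD -iterD subnK // iter_order.
Qed.

Lemma fconnect_froot x : fconnect h (froot h x) x.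
Proof. by rewrite h_sym connect_root. Qed.

Lemma froot_fconnect b x : froot h b == b -> fconnect h b x -> froot h x = b.
Proof. by move=> /eqP rb /(fingraph.rootP h_sym) <-. Qed.

Variables (K : fieldType) (V : finType) (t : T -> V).

Lemma cycder_orbit b x q :
  cycder K t (orbit h b) x q =
  if fconnect h b x then pathel K (t x) (traject h (h x) (order h x).-1) q else 0.
Proof.
rewrite /cycder; case: ifPn => [bx|nbx]; last first.
  rewrite big1 // => k /eqP kx; move: nbx; rewrite fconnect_orbit -kx.
  by rewrite mem_nth.
have x_orb : x \in orbit h b by rewrite -fconnect_orbit.
have lt_i : (index x (orbit h b) < size (orbit h b))%N by rewrite index_mem.
rewrite (big_pred1 (Ordinal lt_i)) /=; last first.
  move=> k /=; apply/eqP/eqP => [kx|-> /=]; last exact: nth_index.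
  by apply/val_inj; rewrite /= -kx index_uniq ?orbit_uniq.
rewrite size_orbit rot_orbit; last by rewrite -size_orbit.
rewrite iterS -/(findex h b x) iter_findex // /orbit take_traject.
  by rewrite (order_fconnect bx).
by rewrite -(order_fconnect (fconnect1 h x)) -(order_fconnect bx) leq_pred.
Qed.

Lemma sum_froots_cycder (w : T -> K) x q :
  \sum_(b | froot h b == b) w b * cycder K t (orbit h b) x q =
  w (froot h x) * pathel K (t x) (traject h (h x) (order h x).-1) q.
Proof.
rewrite (bigD1 (froot h x)) /=; last by rewrite (root_root h_sym).
rewrite cycder_orbit fconnect_froot.
rewrite big1 ?addr0 // => b /andP[rb nb]; rewrite cycder_orbit.
by case: ifP => [/(froot_fconnect rb) xb|_]; [rewrite xb eqxx in nb | rewrite mulr0].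
Qed.
End Orbits.

(** * The relations of the Jacobian algebra *)

Section Quiver.
Variables (K : fieldType) (V A : finType) (s t : A -> V) (f g : A -> A) (c : A -> K).
Hypothesis connected : forall u v : V, connect (fun x y => [exists a : A,
  ((s a == x) && (t a == y)) || ((s a == y) && (t a == x))]) u v.
Hypothesis no_loop : forall a, s a != t a.
Hypothesis no_2cycle : forall a b, ~ (s a = t b /\ t a = s b).
Hypothesis out_deg2 : forall v, #|[set a | s a == v]| = 2.
Hypothesis g_inj : injective g.
Hypothesis s_f : forall a, s (f a) = t a.
Hypothesis s_g : forall a, s (g a) = t a.
Hypothesis f_neq_g : forall a, f a != g a.
Hypothesis f3 : forall a, f (f (f a)) = a.
Hypothesis c_g : forall a, c (g a) = c a.

Local Notation elt := (elt K V A).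
Local Notation vp := (vpath K s t).
Local Notation pathel_vp := (pathel_vpath K (s := s) (t := t)).

Lemma out_arrows a y : s y = t a -> y = f a \/ y = g a.
Proof.
move=> sy; have out_ta : [set z | s z == t a] = [set f a; g a].
  apply/esym/eqP; rewrite eqEcard subUset !sub1set !inE s_f s_g eqxx /=.
  by rewrite out_deg2 cards2 f_neq_g.
have : y \in [set z | s z == t a] by rewrite inE sy.
by rewrite out_ta !inE => /orP[] /eqP; [left | right].
Qed.

Lemma f_inj : injective f.
Proof. exact: (can_inj (g := fun x => f (f x)) f3). Qed.

Lemma f_neq a : f a <> a.
Proof. by move=> e; move: (no_loop a); rewrite -{1}e s_f eqxx. Qed.

Lemma ff_neq a : f (f a) <> a.
Proof. by move=> e; apply: (@f_neq a); rewrite -{2}(f3 a) e. Qed.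

Lemma ffg_neq a : f (f (g a)) <> a.
Proof. by move=> e; move: (f_neq_g a); rewrite -{1}e f3 eqxx. Qed.

Lemma orbit_f a : orbit f a = [:: a; f a; f (f a)].
Proof.
have f_cycle : fcycle f [:: a; f a; f (f a)] by rewrite /= f3 !eqxx.
have f_uniq : uniq [:: a; f a; f (f a)].
  have [fa ffa] := (introN eqP (@f_neq a), introN eqP (@ff_neq a)).
  by rewrite /= !inE !negb_or (inj_eq f_inj) ![a == _]eq_sym fa ffa.
by rewrite (orbitE f_cycle f_uniq (mem_head _ _)) /= eqxx.
Qed.

Lemma g_neq a : g a != a.
Proof. by apply: contraNneq (no_loop a) => e; rewrite -{1}e s_g. Qed.

Lemma gg_neq a : g (g a) != a.
Proof. by apply/eqP => e; apply: (@no_2cycle a (g a)); rewrite s_g -{1}e s_g. Qed.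

Lemma order_g_ge3 a : (3 <= order g a)%N.
Proof.
have := iter_order g_inj a; have := order_gt0 g a.
case: (order g a) => [|[|[|n]]] // _ /eqP; by rewrite ?(negbTE (g_neq a)) ?(negbTE (gg_neq a)).
Qed.

Lemma c_iter n x : c (iter n g x) = c x.
Proof. by elim: n => //= n IH; rewrite c_g. Qed.

Lemma c_froot x : c (froot g x) = c x.
Proof. by rewrite -{2}(iter_findex (fconnect_froot g_inj x)) c_iter. Qed.

Definition ftail x := [:: f x; f (f x)].
Definition gtail x := traject g (g x) (order g x).-1.

Lemma endv_ftail x : endv t (t x) (ftail x) = s x.
Proof. by rewrite /endv /= -s_f f3. Qed.

Lemma endv_traject x k : endv t (t x) (traject g (g x) k) = t (iter k g x).
Proof. by elim: k x => //= k IH x; rewrite -iterS iterSr; apply: IH. Qed.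

Lemma endv_gtail x : endv t (t x) (gtail x) = s x.
Proof.
by rewrite endv_traject -s_g -iterS (ltn_predK (order_gt0 g x)) iter_order.
Qed.

Lemma valid_traject x k : valid_from s t (t x) (traject g (g x) k).
Proof. by elim: k x => //= k IH x; rewrite s_g eqxx IH. Qed.

Lemma dW_vpath x q : dW t f g c x q = vp (t x) (ftail x) q - c x * vp (t x) (gtail x) q.
Proof.
have f_part : \sum_(a | froot f a == a) cycder K t [:: a; f a; f (f a)] x q =
    pathel K (t x) (ftail x) q.
  have order_f : order f x = 3 by rewrite -size_orbit orbit_f.
  have := sum_froots_cycder f_inj t (fun _ => 1 : K) x q; rewrite order_f mul1r => <-.
  by apply: eq_bigr => a _; rewrite orbit_f mul1r.
rewrite /dW f_part -/(orbit g _) (sum_froots_cycder g_inj) c_froot.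
by rewrite !pathel_vp ?valid_traject //= !s_f !eqxx.
Qed.

(* [Gen lam v l x r] stands for lam l (d_x W) r, with l a path from v. *)
Record gen := Gen {
  gen_coef : K; gen_src : V; gen_left : seq A; gen_arrow : A; gen_right : seq A }.

Definition genval (x : gen) : elt :=
  emul t (emul t (fun q => gen_coef x * vp (gen_src x) (gen_left x) q)
                 (dW t f g c (gen_arrow x)))
    (vp (s (gen_arrow x)) (gen_right x)).

Lemma genval_vpath lam v l x r q :
  genval (Gen lam v l x r) q = if endv t v l == t x then
    lam * (vp v (l ++ ftail x ++ r) q - c x * vp v (l ++ gtail x ++ r) q) else 0.
Proof.
rewrite /genval /= (eq_emull t (x' := fun q => lam * emul t (vp v l) (dW t f g c x) q));
  last by move=> q'; rewrite emulZl.
rewrite emulZl (eq_emull t (x' := fun q => emul t (vp v l) (vp (t x) (ftail x)) q -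
                                  c x * emul t (vp v l) (vp (t x) (gtail x)) q)); last first.
  by move=> q'; rewrite -emulBr; apply: eq_emulr => q''; rewrite dW_vpath.
rewrite emulBl !emul_vpath3 endv_ftail endv_gtail eqxx !andbT.
by case: eqP; rewrite ?mulr0 ?subrr ?mulr0.
Qed.

Definition gensum (G : seq gen) : elt := fun q => \sum_(x <- G) genval x q.

Lemma gensum_in_gen_ideal G : in_gen_ideal s t f g c (gensum G).
Proof.
case: G => [|x0 G].
  have no_ord0 : 'I_0 -> A by case.
  exists 0%N, (fun _ _ => 0), (fun _ _ => 0), no_ord0; split; first by case.
  by move=> q; rewrite /gensum big_nil big_ord0.
pose x k := nth x0 (x0 :: G) k.
exists (size (x0 :: G)), (fun k q => gen_coef (x k) * vp (gen_src (x k)) (gen_left (x k)) q),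
  (fun k => vp (s (gen_arrow (x k))) (gen_right (x k))), (fun k => gen_arrow (x k)); split.
  by move=> k; split => q nq; rewrite vpath_is_elt ?mulr0.
by move=> q; rewrite /gensum (big_nth x0) big_mkord.
Qed.

Definition ideal_upto N (x : elt) :=
  exists G : seq gen, forall q : V * seq A, (size q.2 < N)%N -> x q = gensum G q.

Lemma ideal_upto_jacobian x : (forall N, ideal_upto N x) -> in_jacobian_ideal s t f g c x.
Proof.
move=> x_ideal n; have [G xG] := x_ideal n.
by exists (gensum G); split => //; apply: gensum_in_gen_ideal.
Qed.

Lemma eq_ideal_upto N x y : x =1 y -> ideal_upto N x -> ideal_upto N y.
Proof. by move=> xy [G xG]; exists G => q q_short; rewrite -xy xG. Qed.

Lemma ideal_upto_le M N x : (M <= N)%N -> ideal_upto N x -> ideal_upto M x.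
Proof. by move=> MN [G xG]; exists G => q q_short; apply: xG; apply: leq_trans MN. Qed.

Lemma ideal_upto_genval N x : ideal_upto N (genval x).
Proof. by exists [:: x] => q _; rewrite /gensum big_seq1. Qed.

Lemma ideal_upto_vanish N x : (forall q, (size q.2 < N)%N -> x q = 0) -> ideal_upto N x.
Proof. by move=> x0; exists [::] => q q_short; rewrite x0 // /gensum big_nil. Qed.

Lemma ideal_uptoD N x y :
  ideal_upto N x -> ideal_upto N y -> ideal_upto N (fun q => x q + y q).
Proof.
move=> [G xG] [H yH]; exists (G ++ H) => q q_short.
by rewrite xG ?yH // /gensum big_cat.
Qed.

Lemma ideal_uptoZ N a x : ideal_upto N x -> ideal_upto N (fun q => a * x q).
Proof.
move=> [G xG]; exists [seq Gen (a * gen_coef y) (gen_src y) (gen_left y) (gen_arrow y)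
                        (gen_right y) | y <- G] => q q_short.
rewrite xG // /gensum big_map mulr_sumr; apply: eq_bigr => y _.
rewrite /genval -emulZl; apply: eq_emull => q'.
by rewrite -emulZl; apply: eq_emull => q'' /=; rewrite mulrA.
Qed.

Lemma ideal_uptoB N x y :
  ideal_upto N x -> ideal_upto N y -> ideal_upto N (fun q => x q - y q).
Proof.
move=> Ix /(ideal_uptoZ (-1)) INy; apply: eq_ideal_upto (ideal_uptoD Ix INy) => q.
by rewrite mulN1r.
Qed.

Definition sandwiched v0 (u w : seq A) (q : V * seq A) :=
  [&& q.1 == v0, valid_from s t q.1 q.2, (size u + size w <= size q.2)%N,
      take (size u) q.2 == u & drop (size q.2 - size w) q.2 == w].

Definition filling (u w r : seq A) := drop (size u) (take (size r - size w) r).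

(* Multiplication by u on the left and w on the right, computed pathwise:
   [sandwich v0 u w x] maps u m w (from v0) to x m. *)
Definition sandwich v0 (u w : seq A) (x : elt) : elt :=
  fun q => if sandwiched v0 u w q then x (endv t v0 u, filling u w q.2) else 0.

Lemma sandwichedP v0 u w q : sandwiched v0 u w q -> q = (v0, u ++ filling u w q.2 ++ w).
Proof.
case: q => v r /and5P[/= /eqP-> _ sz /eqP tu /eqP dw]; congr (_, _).
have le_u : (size u <= size r - size w)%N by lia.
by rewrite /filling -{1}tu -{2}dw catA -{1}(take_takel _ le_u) !cat_take_drop.
Qed.

Lemma size_filling u w r : (size u + size w <= size r)%N ->
  size (filling u w r) = (size r - size u - size w)%N.
Proof. by move=> le_uw; rewrite /filling size_drop size_take; case: ltnP => ?; lia. Qed.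

Lemma sandwich_vpath v0 u w v p q : endv t v0 u = v ->
  sandwich v0 u w (vp v p) q = vp v0 (u ++ p ++ w) q.
Proof.
move=> ev; rewrite /sandwich.
have [->|nq] := eqVneq q (v0, u ++ p ++ w).
  rewrite /sandwiched /filling /=.
  have -> : (size (u ++ p ++ w) - size w = size u + size p)%N by rewrite !size_cat; lia.
  rewrite !size_cat leq_add2l leq_addl eqxx.
  rewrite take_size_cat // catA drop_size_cat ?size_cat // take_size_cat ?size_cat //.
  rewrite drop_size_cat // !eqxx /vpath ev eqxx !andbT !valid_from_cat endv_cat ev.
  by rewrite eqxx andbT; case: (valid_from s t v0 u); case: (valid_from s t v p).
rewrite (vpath_neq K s t nq); case: ifP => // /sandwichedP qE.
by apply: vpath_neq; apply: contraNneq nq => -[_ pE]; rewrite qE /= pE.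
Qed.

Definition gen_shift v0 (u w : seq A) (x : gen) : gen :=
  Gen (if endv t v0 u == gen_src x then gen_coef x else 0) v0 (u ++ gen_left x)
      (gen_arrow x) (gen_right x ++ w).

Lemma sandwich_genval v0 u w x q :
  sandwich v0 u w (genval x) q = genval (gen_shift v0 u w x) q.
Proof.
case: x => lam v l x r; rewrite /gen_shift /sandwich /= !genval_vpath endv_cat.
have [ev|nev] := eqVneq (endv t v0 u) v.
  rewrite ev; case: (endv t v l == t x); last by case: ifP.
  have regroup m : vp v0 ((u ++ l) ++ m ++ r ++ w) q = vp v0 (u ++ (l ++ m ++ r) ++ w) q.
    by rewrite !catA.
  rewrite !regroup -!(sandwich_vpath w _ _ ev) /sandwich ev.
  by case: ifP; rewrite ?mulr0 ?subrr ?mulr0.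
rewrite mul0r !if_same; case: ifP => //= _; case: ifP => // _.
by rewrite !vpath_neq ?xpair_eqE ?(negbTE nev) ?mulr0 ?subrr ?mulr0.
Qed.

Lemma ideal_upto_sandwich N v0 u w v p : endv t v0 u = v -> ideal_upto N (vp v p) ->
  ideal_upto (N + size u + size w) (vp v0 (u ++ p ++ w)).
Proof.
move=> ev [G pG]; exists (map (gen_shift v0 u w) G) => q q_short.
rewrite -(sandwich_vpath w p q ev) /gensum big_map.
under eq_bigr do rewrite -sandwich_genval.
rewrite /sandwich; case: ifP => [qs|_]; last by rewrite big1.
case/and5P: (qs) => _ _ sz _ _; rewrite pG //= size_filling //; lia.
Qed.

Definition zpath a := [:: a; f a; g (f a)].

(* gam ends at s a; eps and alp are the last two arrows of the g-cycle of gam,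
   and f (del a) = eps a; uu a and ww a are the unused middles of the g-cycles
   of gam a and del a. *)
Definition gam a := f (f a).
Definition eps a := finv g (gam a).
Definition alp a := finv g (eps a).
Definition del a := f (f (eps a)).
Definition uu a := traject g (g (gam a)) (order g (gam a) - 3).
Definition ww a := traject g (iter 3 g (del a)) (order g (del a) - 3).

Lemma t_gam a : t (gam a) = s a.
Proof. by rewrite /gam -s_f f3. Qed.

Lemma g_eps a : g (eps a) = gam a.
Proof. exact: f_finv. Qed.

Lemma g_alp a : g (alp a) = eps a.
Proof. exact: f_finv. Qed.

Lemma alp_iter a : alp a = iter (order g (gam a) - 2) g (gam a).
Proof.
rewrite /alp /eps -[finv g (finv g _)]/(iter 2 (finv g) _).
by rewrite (iter_finv g_inj (ltnW (order_g_ge3 _))).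
Qed.

Lemma f_eps a : f (eps a) = g (f a).
Proof.
have : s (f (eps a)) = t (f a) by rewrite s_f -s_g g_eps /gam s_f.
by case/out_arrows => // fe; move: (f_neq_g (eps a)); rewrite fe g_eps eqxx.
Qed.

Lemma f_del a : f (del a) = eps a.
Proof. exact: f3. Qed.

Lemma t_del a : t (del a) = t (alp a).
Proof. by rewrite -s_f f_del -g_alp s_g. Qed.

Lemma g_del a : g (del a) = f (alp a).
Proof.
have : s (g (del a)) = t (alp a) by rewrite s_g t_del.
by case/out_arrows => // gd; move: (f_neq_g (del a)); rewrite gd g_alp f_del eqxx.
Qed.

Lemma gtail_gam a : gtail (gam a) = uu a ++ [:: alp a; eps a].
Proof.
have n3 := order_g_ge3 (gam a).
rewrite /gtail /uu -g_alp alp_iter.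
have -> : (order g (gam a)).-1 = (order g (gam a) - 3 + 2)%N by lia.
rewrite trajectD /= -iterSr.
by have -> : (order g (gam a) - 3).+1 = (order g (gam a) - 2)%N by lia.
Qed.

Lemma gtail_del a : gtail (del a) = [:: f (alp a); g (f (alp a))] ++ ww a.
Proof.
have n3 := order_g_ge3 (del a).
rewrite /gtail; have -> : (order g (del a)).-1 = (2 + (order g (del a) - 3))%N by lia.
by rewrite /ww trajectD /= g_del.
Qed.

Lemma endv_uu a : endv t (s a) (uu a) = s (alp a).
Proof.
rewrite -t_gam endv_traject -s_g -iterS alp_iter; congr (s (iter _ g _)).
have := order_g_ge3 (gam a); lia.
Qed.

Lemma zpath_step a q :
  vp (s a) (zpath a) q = genval (Gen 1 (s a) [::] (gam a) [:: g (f a)]) q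
    + c (gam a) * (genval (Gen 1 (s a) (rcons (uu a) (alp a)) (del a) [::]) q
    + c (del a) * vp (s a) (uu a ++ zpath (alp a) ++ ww a) q).
Proof.
rewrite !genval_vpath /= t_gam endv_rcons t_del !eqxx !cats0 !mul1r gtail_gam gtail_del.
have -> : [:: f (gam a); f (f (gam a)); g (f a)] = zpath a by rewrite /gam !f3.
have -> : (uu a ++ [:: alp a; eps a]) ++ [:: g (f a)] =
    rcons (uu a) (alp a) ++ [:: f (del a); f (f (del a))].
  by rewrite f_del -f_eps -cats1 -!catA.
have -> : rcons (uu a) (alp a) ++ [:: f (alp a); g (f (alp a))] ++ ww a =
    uu a ++ zpath (alp a) ++ ww a by rewrite -cats1 -!catA.
by rewrite !subrK.
Qed.

Section Star.
Hypothesis star : forall a, (4 <= order g a)%N \/ (4 <= order g (f a))%N.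

(* (star) at del a, together with n_(f (del a)) = n_(gam a), makes the
   sandwich uu a, ww a nonempty. *)
Lemma zpath_ideal_star N a : ideal_upto N (vp (s a) (zpath a)).
Proof.
elim: N a => [|N IH] a; first exact: ideal_upto_vanish.
apply: eq_ideal_upto (fun q => esym (zpath_step a q)) _.
apply: ideal_uptoD; first exact: ideal_upto_genval.
apply/ideal_uptoZ/ideal_uptoD; first exact: ideal_upto_genval.
apply: ideal_uptoZ; apply: ideal_upto_le (ideal_upto_sandwich (ww a) (endv_uu a) (IH (alp a))).
have order_fdel : order g (f (del a)) = order g (gam a) by rewrite f_del /eps /finv order_iter.
rewrite /uu /ww !size_traject; have := order_g_ge3 (gam a); have := order_g_ge3 (del a).
by case: (star (del a)); lia.
Qed.
End Star.

(** * Case (diamond): the octahedron *)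

Section Diamond.
Hypothesis order_g3 : forall a, order g a = 3.

Lemma g3 a : g (g (g a)) = a.
Proof. by have := iter_order g_inj a; rewrite order_g3. Qed.

Lemma ffg_involutive x : f (f (g (f (f (g x))))) = x.
Proof.
set y := f (f (g x)); set z := f (f (g y)).
have t_ffg w : t (f (f (g w))) = t w by rewrite -s_f f3 s_g.
have fy : f y = g x.
  have : s (f y) = t x by rewrite s_f t_ffg.
  by case/out_arrows => // /f_inj /ffg_neq.
have : s (f z) = t x by rewrite s_f !t_ffg.
case/out_arrows => [/f_inj //|]; rewrite -fy => /f_inj zy.
by case: (ffg_neq zy).
Qed.

Lemma gffg x : g (f (f (g x))) = f x.
Proof. by rewrite -{1}(f3 (g (f (f (g x))))) ffg_involutive. Qed.

Lemma gff x : g (f (f x)) = f (g (g x)).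
Proof. by rewrite -{1}(g3 x) gffg. Qed.

Lemma ggf x : g (g (f x)) = f (f (g x)).
Proof. by rewrite -(gffg x) g3. Qed.

Lemma gfg x : g (f (g x)) = f (g (f x)).
Proof. by rewrite -(gffg (g (f x))) ggf f3. Qed.

Ltac oct_norm := repeat first [rewrite f3 | rewrite g3 | rewrite gff | rewrite ggf | rewrite gfg].

(* The quiver is the octahedron: its twelve arrows are the g-orbits of these
   four arrows. *)
Definition oct_reps a := [:: f (f a); f (f (g (g (f (f a))))); f (f (g (f (f a))));
                             f (f (g (g (f (f (g (f (f a))))))))].

Definition oct a := flatten [seq traject g b 3 | b <- oct_reps a].

Lemma oct_f a b : b \in oct a -> f b \in oct a.
Proof.
move: b; apply/allP; rewrite /= !inE; oct_norm; by rewrite !eqxx ?orbT.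
Qed.

Lemma oct_g a b : b \in oct a -> g b \in oct a.
Proof.
move: b; apply/allP; rewrite /= !inE; oct_norm; by rewrite !eqxx ?orbT.
Qed.

Lemma mem_oct_f a b : (f b \in oct a) = (b \in oct a).
Proof. by apply/idP/idP => [/oct_f/oct_f|/oct_f //]; rewrite f3. Qed.

Lemma oct_same_src a x y : s x = s y -> (x \in oct a) = (y \in oct a).
Proof.
suff oct_src u w : s u = s w -> w \in oct a -> u \in oct a.
  by move=> sxy; apply/idP/idP; apply: oct_src.
move=> suw; have : s u = t (f (f w)) by rewrite -s_f f3.
by case/out_arrows => -> /oct_f/oct_f; [move/oct_f | move/oct_g].
Qed.

Lemma mem_oct a b : b \in oct a.
Proof.
pose W := [pred v | [exists y, (s y == v) && (y \in oct a)]].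
have W_src x : (s x \in W) = (x \in oct a).
  apply/existsP/idP => [[y /andP[/eqP sy]]|x_oct]; last by exists x; rewrite eqxx.
  by rewrite (oct_same_src a (esym sy)).
rewrite -W_src -(closed_connect _ (connected (s (f (f (f a)))) _)).
  by rewrite W_src mem_oct_f /= inE eqxx.
move=> u v /existsP[x /orP[]/andP[/eqP <- /eqP <-]];
by rewrite -s_f !W_src mem_oct_f.
Qed.

Lemma fconnect_g3 x y : fconnect g x y = (y \in [:: x; g x; g (g x)]).
Proof.
have gcycle : fcycle g [:: x; g x; g (g x)] by rewrite /= !eqxx g3 eqxx.
exact (fconnect_cycle gcycle (mem_head _ _) y).
Qed.

Lemma not_fconnect_g x y : y <> x -> y <> g x -> y <> g (g x) -> froot g x != froot g y.
Proof.
have g_sym : connect_sym (frel g) := fconnect_sym g_inj.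
move=> n0 n1 n2; rewrite (root_connect g_sym) fconnect_g3 !inE.
by apply/negP; case/or3P => /eqP.
Qed.

(* Each coincidence of two of the four g-orbits, multiplied by a suitable word,
   normalises to one of f x = x, f (f x) = x or f (f (g x)) = x. *)
Ltac oct_absurd neq w E :=
  apply: neq; move: (congr1 w (esym E)) => /=; oct_norm; by [].

Lemma uniq_oct_roots a : uniq [seq froot g b | b <- oct_reps a].
Proof.
rewrite /= !inE !negb_or !not_fconnect_g //.
all: move=> E.
- oct_absurd (@ff_neq a) (fun x => f (f (g x))) E.
- oct_absurd (@ffg_neq a) (fun x => f (f (g x))) E.
- oct_absurd (@f_neq (g a)) f E.
- oct_absurd (@ffg_neq (f (f a))) (fun x => f (g x)) E.
- oct_absurd (@f_neq (g (f a))) (fun x => g (g x)) E.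
- oct_absurd (@ff_neq (g a)) f E.
- oct_absurd (@f_neq (g a)) (fun x => g (g x)) E.
- oct_absurd (@ff_neq (g (g a))) (fun x : A => x) E.
- oct_absurd (@ffg_neq (f a)) (fun x => f (g x)) E.
- oct_absurd (@ff_neq (g (f a))) (fun x => g (g x)) E.
- oct_absurd (@ffg_neq (f a)) g E.
- oct_absurd (@f_neq a) (fun x => f (f (g x))) E.
- oct_absurd (@ffg_neq (f (f a))) (fun x => f (f (g x))) E.
- oct_absurd (@f_neq (g (g a))) (fun x : A => x) E.
- oct_absurd (@ff_neq a) g E.
- oct_absurd (@ff_neq (g (g a))) (fun x => f (g x)) E.
- oct_absurd (@ffg_neq a) (fun x => f (g (f x))) E.
- oct_absurd (@f_neq (g (f a))) (fun x => f (f x)) E.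
Qed.

Lemma prod_froots a : \prod_(b | froot g b == b) c b = \prod_(b <- oct_reps a) c b.
Proof.
have g_sym : connect_sym (frel g) := fconnect_sym g_inj.
rewrite -big_filter (perm_big [seq froot g b | b <- oct_reps a]); last first.
  apply: uniq_perm; rewrite ?filter_uniq ?index_enum_uniq ?uniq_oct_roots // => b.
  rewrite mem_filter mem_index_enum andbT; apply/idP/mapP => [/eqP rb|[r _ ->]].
    have /flatten_mapP[r r_reps b_orb] := mem_oct a b.
    by exists r => //; rewrite -{1}rb; apply/(fingraph.rootP g_sym); rewrite g_sym fconnect_g3.
  exact: roots_root.
by rewrite big_map; apply: eq_bigr => b _; rewrite c_froot.
Qed.

Hypothesis prod_neq1 : \prod_(b | froot g b == b) c b != 1.

Lemma alp_diamond b : alp b = g (gam b).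
Proof. by rewrite alp_iter order_g3. Qed.

Lemma eps_diamond b : eps b = g (g (gam b)).
Proof. by rewrite /eps /finv order_g3. Qed.

Lemma s_alp b : s (alp b) = s b.
Proof. by rewrite alp_diamond s_g t_gam. Qed.

Lemma alp_alp b : alp (alp b) = b.
Proof.
have : s b = t (gam (alp b)) by rewrite t_gam s_alp.
case/out_arrows => [|gb]; last by rewrite {2}gb alp_diamond.
rewrite /gam f3 => ab; move: (f_neq_g (gam b)).
by rewrite -alp_diamond -ab /gam f3 eqxx.
Qed.

(* Here uu and ww are empty and alp is an involution, so two steps of
   [zpath_step] return to [zpath a] with factor prod c, which is not 1. *)
Lemma zpath_ideal_diamond N a : ideal_upto N (vp (s a) (zpath a)).
Proof.
have step b q : vp (s b) (zpath b) q = genval (Gen 1 (s b) [::] (gam b) [:: g (f b)]) q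
    + c (gam b) * (genval (Gen 1 (s b) (rcons (uu b) (alp b)) (del b) [::]) q
    + c (del b) * vp (s b) (zpath (alp b)) q).
  by rewrite zpath_step /uu /ww !order_g3.
set a' := alp a.
set lam1 := c (gam a) * c (del a); set lam2 := c (gam a') * c (del a').
have lam12 : lam1 * lam2 = \prod_(b | froot g b == b) c b.
  rewrite (prod_froots a) /lam1 /lam2 /a' /del !eps_diamond alp_diamond /gam.
  by rewrite !big_cons big_nil mulr1 !mulrA.
pose E b q := genval (Gen 1 (s b) [::] (gam b) [:: g (f b)]) q
    + c (gam b) * genval (Gen 1 (s b) (rcons (uu b) (alp b)) (del b) [::]) q.
have unit_lam : 1 - lam1 * lam2 != 0 by rewrite subr_eq0 eq_sym lam12.
have zpathE q : vp (s a) (zpath a) q = (1 - lam1 * lam2)^-1 * (E a q + lam1 * E a' q).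
  apply: (mulfI unit_lam); rewrite mulVKf //.
  have step_a' := step a' q; rewrite /a' alp_alp s_alp -/a' in step_a'.
  rewrite mulrBl mul1r {1}step step_a' /E /lam1 /lam2 /a' s_alp alp_alp; ring.
have E_ideal b : ideal_upto N (E b).
  by apply: ideal_uptoD; [|apply: ideal_uptoZ]; apply: ideal_upto_genval.
apply: eq_ideal_upto (fun q => esym (zpathE q)) _.
by apply/ideal_uptoZ/ideal_uptoD; [|apply: ideal_uptoZ]; apply: E_ideal.
Qed.
End Diamond.

(** * Products of arrows with z_i *)

Lemma gtail_rcons x : gtail x ++ [:: x] = g x :: gtail (g x).
Proof.
have traject_gtail : traject g (g x) (order g x) = rcons (gtail x) x.
  rewrite /gtail -{1}(prednK (order_gt0 g x)) trajectSr -iterSr prednK ?order_gt0 //.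
  by rewrite iter_order.
by rewrite /gtail (order_iter g_inj 1) -trajectS prednK ?order_gt0 // cats1 traject_gtail.
Qed.

Section ZpathIdeal.
Hypothesis zpath_ideal : forall N a, ideal_upto N (vp (s a) (zpath a)).

Lemma fcycle_self_ideal a N : ideal_upto N (vp (s a) [:: a; f a; f (f a); a]).
Proof.
set w := traject g (g (g (f a))) (order g (f a)).-2.
have gtailE : gtail (f a) = g (f a) :: w.
  by rewrite /gtail -trajectS prednK //; have := order_g_ge3 (f a); lia.
have pathE q : vp (s a) [:: a; f a; f (f a); a] q =
    genval (Gen 1 (s a) [:: a; f a] (f a) [::]) q + c (f a) * vp (s a) (zpath a ++ w) q.
  by rewrite genval_vpath /= eqxx mul1r cats0 /ftail f3 gtailE subrK.
apply: eq_ideal_upto (fun q => esym (pathE q)) _.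
apply/ideal_uptoD/ideal_uptoZ; first exact: ideal_upto_genval.
have := ideal_upto_sandwich (u := [::]) w (erefl (s a)) (zpath_ideal N a).
by rewrite addn0 => /(ideal_upto_le (leq_addr _ _)).
Qed.

Lemma self_fcycle_g_ideal a N :
  ideal_upto N (vp (s a) [:: a; g a; f (g a); f (f (g a))]).
Proof.
have pathE q : vp (s a) [:: a; g a; f (g a); f (f (g a))] q =
    vp (s a) [:: a; f a; f (f a); a] q - genval (Gen 1 (s a) [:: a] a [:: a]) q
    + genval (Gen 1 (s a) [:: a; g a] (g a) [::]) q.
  by rewrite !genval_vpath /= !eqxx !mul1r !cats0 /ftail /= gtail_rcons c_g; ring.
apply: eq_ideal_upto (fun q => esym (pathE q)) _.
apply/ideal_uptoD/ideal_upto_genval/ideal_uptoB/ideal_upto_genval.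
exact: fcycle_self_ideal.
Qed.

Lemma fcycle_g_self_ideal a N :
  ideal_upto N (vp (s a) [:: g (gam a); f (g (gam a)); f (f (g (gam a))); a]).
Proof.
set d := g (gam a).
have pathE q : vp (s a) [:: d; f d; f (f d); a] q =
    genval (Gen 1 (s a) [:: d] d [:: a]) q - genval (Gen 1 (s a) [::] (gam a) [:: gam a; a]) q
    + vp (s a) [:: a; f a; f (f a); a] q.
  rewrite !genval_vpath /endv /= t_gam !eqxx !mul1r.
  have -> : gtail (gam a) ++ [:: gam a; a] = d :: gtail d ++ [:: a].
    by rewrite -[[:: gam a; a]]cat1s catA gtail_rcons.
  rewrite /d c_g /gam !f3; ring.
apply: eq_ideal_upto (fun q => esym (pathE q)) _.
apply/ideal_uptoD/fcycle_self_ideal/ideal_uptoB; exact: ideal_upto_genval.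
Qed.

Lemma arrow_zrep_jacobian al be :
  in_jacobian_ideal s t f g c (emul t (pathel K (s al) [:: al]) (zrep K s f be)).
Proof.
apply: ideal_upto_jacobian => N.
have prodE q : emul t (pathel K (s al) [:: al]) (zrep K s f be) q =
    if t al == s be then vp (s al) [:: al; be; f be; f (f be)] q else 0.
  rewrite (eq_emull t (x' := vp (s al) [:: al])); last first.
    by move=> q'; rewrite pathel_vp //= eqxx.
  rewrite (eq_emulr t _ (y' := vp (s be) [:: be; f be; f (f be)])); last first.
    by move=> q'; rewrite /zrep pathel_vp //= !s_f !eqxx.
  by rewrite emul_vpath.
apply: eq_ideal_upto (fun q => esym (prodE q)) _.
have [tal|_] := eqVneq (t al) (s be); last exact: ideal_upto_vanish.
have [->|->] := out_arrows (esym tal); last exact: self_fcycle_g_ideal.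
by have := fcycle_self_ideal al N; rewrite f3.
Qed.

Lemma zrep_arrow_jacobian al be :
  in_jacobian_ideal s t f g c (emul t (zrep K s f be) (pathel K (s al) [:: al])).
Proof.
apply: ideal_upto_jacobian => N.
have prodE q : emul t (zrep K s f be) (pathel K (s al) [:: al]) q =
    if s be == s al then vp (s be) [:: be; f be; f (f be); al] q else 0.
  rewrite (eq_emull t (x' := vp (s be) [:: be; f be; f (f be)])); last first.
    by move=> q'; rewrite /zrep pathel_vp //= !s_f !eqxx.
  rewrite (eq_emulr t _ (y' := vp (s al) [:: al])); last first.
    by move=> q'; rewrite pathel_vp //= eqxx.
  by rewrite emul_vpath /endv /= -/(gam be) t_gam.
apply: eq_ideal_upto (fun q => esym (prodE q)) _.
have [sbe|_] := eqVneq (s be) (s al); last exact: ideal_upto_vanish.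
have : s be = t (gam al) by rewrite t_gam.
case/out_arrows => ->; first by rewrite /gam f3; apply: fcycle_self_ideal.
by rewrite s_g t_gam; apply: fcycle_g_self_ideal.
Qed.
End ZpathIdeal.

Lemma zrep_annihilates_arrows :
  ((forall a, (4 <= order g a)%N \/ (4 <= order g (f a))%N) \/
   ((forall a, order g a = 3) /\ \prod_(b | froot g b == b) c b != 1)) ->
  forall al be,
    in_jacobian_ideal s t f g c (emul t (pathel K (s al) [:: al]) (zrep K s f be)) /\
    in_jacobian_ideal s t f g c (emul t (zrep K s f be) (pathel K (s al) [:: al])).
Proof.
move=> cases al be.
have zpath_ideal N a : ideal_upto N (vp (s a) (zpath a)).
  by case: cases => [star|[order_g3 prod_neq1]];
    [apply: zpath_ideal_star | apply: zpath_ideal_diamond].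
by split; [apply: arrow_zrep_jacobian | apply: zrep_arrow_jacobian].
Qed.
End Quiver.

Theorem lemma4p6 (K : fieldType) (V A : finType) (s t : A -> V)
    (f g : A -> A) (c : A -> K) :
  quiver_setting s t f g c ->
  ((* (star) *) (forall a : A, (4 <= order g a)%N \/ (4 <= order g (f a))%N)
   \/ ((* (diamond) *) (forall a : A, order g a = 3%N) /\
       \prod_(b | froot g b == b) c b != 1)) ->
  forall (i : V) (be al : A), s be = i ->
    in_jacobian_ideal s t f g c (emul t (pathel K (s al) [:: al]) (zrep K s f be)) /\
    in_jacobian_ideal s t f g c (emul t (zrep K s f be) (pathel K (s al) [:: al])).
Proof.
move=> [connected no_loop no_2cycle degrees [_ g_inj arrows f3 c_unit]] cases i be al _.
have out_deg2 v : #|[set a | s a == v]| = 2 by case: (degrees v).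
have s_f a : s (f a) = t a by case: (arrows a).
have s_g a : s (g a) = t a by case: (arrows a).
have f_neq_g a : f a != g a by case: (arrows a).
have c_g a : c (g a) = c a by case: (c_unit a).
exact: (zrep_annihilates_arrows connected no_loop no_2cycle out_deg2 g_inj s_f s_g f_neq_g
  f3 c_g cases).
Qed.
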